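(* Let $(Y,\preceq,\prec,\to)$ be a solid vector space, let $b\in Y$ with $b\succ0$, and let $\|\cdot\|\colon Y\to\mathbb R$ be the Minkowski functional of $[-b,b]$. Then: (i) $\|\cdot\|$ is a monotone norm on $Y$ and $\|x\|=\min\{\lambda\ge0: -\lambda b\preceq x\preceq\lambda b\}$ for all $x\in Y$; (ii) for $x\in Y$ and $\varepsilon>0$, $\|x\|<\varepsilon$ if and only if $-\varepsilon b\prec x\prec\varepsilon b$.
   Context: Vector space with convergence: a real vector space $Y$ with a relation $\to$ between sequences in $Y$ and points of $Y$ (uniqueness of limits not assumed) such that (C1) $x_n\to x$, $y_n\to y$ imply $x_n+y_n\to x+y$; (C2) $x_n\to x$, $\lambda\in\mathbb R$ imply $\lambda x_n\to\lambda x$; (C3) $\lambda_n\to\lambda$ in $\mathbb R$ imply $\lambda_n x\to\lambda x$. $A\subseteq Y$ is open if $x_n\to x\in A$ implies $x_n\in A$ for all but finitely many $n$; closed if $x_n\to x$, $x_n\in A$ $\forall n$ imply $x\in A$; $A^\circ$ is the union of all open subsets of $A$. A cone is a nonempty closed $K$ with $\lambda K\subseteq K$ ($\lambda\ge0$), $K+K\subseteq K$, $K\cap(-K)=\{0\}$; solid if $K\ne\{0\}$, $K^\circ\ne\emptyset$. A vector ordering is a partial order $\preceq$ with (V1) $x\preceq y\Rightarrow x+z\preceq y+z$; (V2) $\lambda\ge0$, $x\preceq y\Rightarrow\lambda x\preceq\lambda y$; (V3) $x_n\to x$, $y_n\to y$, $x_n\preceq y_n$ $\forall n\Rightarrow x\preceq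 y$. Solid vector space: positive cone $K=\{x:x\succeq0\}$ solid, with $x\prec y$ iff $y-x\in K^\circ$. $[a,b]=\{x:a\preceq x\preceq b\}$. Minkowski functional of $A$: $\|x\|=\inf\{\lambda\ge0: x\in\lambda A\}$. A norm is monotone if $\|x\|\le\|y\|$ whenever $0\preceq x\preceq y$. *)

From HB Require Import structures.
From mathcomp Require Import all_boot all_order all_algebra.
From mathcomp Require Import all_classical all_reals topology normedtype.
Set Implicit Arguments. Unset Strict Implicit. Unset Printing Implicit Defensive.
Import Order.TTheory GRing.Theory Num.Theory numFieldNormedType.Exports.
Local Open Scope classical_set_scope.
Local Open Scope ring_scope.

Section VSC.
Variables (R : realType) (Y : lmodType R).
Variable conv : (nat -> Y) -> Y -> Prop.

Definition vsc_axioms : Prop :=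
  [/\ (forall (x y : nat -> Y) (a c : Y), conv x a -> conv y c ->
          conv (fun n => x n + y n) (a + c)),
      (forall (x : nat -> Y) (a : Y) (l : R), conv x a ->
          conv (fun n => l *: x n) (l *: a)) &
      (forall (lam : nat -> R) (l : R) (x : Y), lam @ \oo --> l ->
          conv (fun n => lam n *: x) (l *: x))].

Definition vopen (A : set Y) : Prop :=
  forall (x : nat -> Y) (a : Y), conv x a -> A a ->
    exists N : nat, forall n : nat, (N <= n)%N -> A (x n).

Definition vclosed (A : set Y) : Prop :=
  forall (x : nat -> Y) (a : Y), conv x a -> (forall n, A (x n)) -> A a.

Definition vinterior (A : set Y) : set Y :=
  fun x => exists U : set Y, [/\ vopen U, U `<=` A & U x].

Definition is_cone (K : set Y) : Prop :=
  [/\ K !=set0, vclosed K,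
      (forall (l : R) (x : Y), 0 <= l -> K x -> K (l *: x)),
      (forall x y, K x -> K y -> K (x + y)) &
      K `&` [set - x | x in K] = [set 0]].

Definition solid_cone (K : set Y) : Prop :=
  [/\ is_cone K, K <> [set 0] & vinterior K !=set0].

Variable le : Y -> Y -> Prop.

Definition vector_ordering : Prop :=
  [/\ (forall x, le x x) /\
      (forall x y, le x y -> le y x -> x = y) /\
      (forall x y z, le x y -> le y z -> le x z),
      (forall x y z, le x y -> le (x + z) (y + z)),
      (forall (l : R) x y, 0 <= l -> le x y -> le (l *: x) (l *: y)) &
      (forall (x y : nat -> Y) (a c : Y), conv x a -> conv y c ->
          (forall n, le (x n) (y n)) -> le a c)].

Definition pos_cone : set Y := [set x | le 0 x].

Definition vlt (x y : Y) : Prop := vinterior pos_cone (y - x).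

Definition solid_vector_space : Prop :=
  [/\ vsc_axioms, vector_ordering & solid_cone pos_cone].

Definition order_interval (a b : Y) : set Y := [set x | le a x /\ le x b].

Definition monotone_norm (nrm : Y -> R) : Prop :=
  forall x y, le 0 x -> le x y -> nrm x <= nrm y.
End VSC.

Definition minkowski (R : realType) (Y : lmodType R) (A : set Y) (x : Y) : R :=
  inf [set l : R | 0 <= l /\ exists2 a, A a & x = l *: a].

Definition is_norm (R : realType) (Y : lmodType R) (nrm : Y -> R) : Prop :=
  [/\ (forall x, 0 <= nrm x),
      (forall x, nrm x = 0 <-> x = 0),
      (forall (l : R) x, nrm (l *: x) = `|l| * nrm x) &
      (forall x y, nrm (x + y) <= nrm x + nrm y)].

From HB Require Import structures.
From mathcomp Require Import all_boot all_order all_algebra.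
From mathcomp Require Import all_classical all_reals topology normedtype.
From mathcomp Require Import sequences.
From mathcomp Require Import lra.
Import Order.TTheory GRing.Theory Num.Theory numFieldNormedType.Exports.
Set Implicit Arguments. Unset Strict Implicit. Unset Printing Implicit Defensive.
Local Open Scope classical_set_scope.
Local Open Scope ring_scope.

(* Since b is interior to the positive cone, b + v / n >= 0 for n large; hence
   every x lies in some [-l b, l b], and the admissible l form an up-closed ray
   that contains its infimum m (apply (V3) to -(m + 1/n) b <= x <= (m + 1/n) b).  For (ii): if ||x|| < eps then x + eps b is the positive vector
   x + ||x|| b plus the interior vector (eps - ||x||) b, hence interior, and
   likewise eps b - x; conversely, if both are interior they absorb -eps b / n,
   which puts x in [-(1 - 1/n) eps b, (1 - 1/n) eps b]. *)

Section SolidVectorSpace.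
Variables (R : realType) (Y : lmodType R).
Variables (conv : (nat -> Y) -> Y -> Prop) (le : Y -> Y -> Prop).
Hypothesis vscY : vsc_axioms conv.
Hypothesis ordY : vector_ordering conv le.

Local Notation K := (pos_cone le).
Local Notation interior := (vinterior conv).

Lemma conv_ext (u v : nat -> Y) (a : Y) :
  (forall n, u n = v n) -> conv u a -> conv v a.
Proof. by move=> uv; rewrite (_ : v = u) //; apply: boolp.funext => n. Qed.

Lemma conv_cst (w : Y) : conv (fun _ => w) w.
Proof.
case: vscY => _ _ C3; have := C3 (fun _ => 1) 1 w (cvg_cst (1 : R)).
by rewrite scale1r; apply; apply: filter_class.
Qed.

Lemma conv_harmonic (v : Y) : conv (fun n => n.+1%:R^-1 *: v) 0.
Proof.
case: vscY => _ _ C3; have := C3 _ 0 v (@cvg_harmonic R).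
by rewrite scale0r; apply: conv_ext.
Qed.

Lemma le_subr (x y : Y) : le x y <-> le 0 (y - x).
Proof.
case: ordY => _ V1 _ _; split => h.
- by have := V1 _ _ (- x) h; rewrite subrr.
- by have := V1 _ _ x h; rewrite add0r subrK.
Qed.

Lemma le_add (a c d e : Y) : le a d -> le c e -> le (a + c) (d + e).
Proof.
case: ordY => [[_ [_ letrans]] V1 _ _] ad ce.
apply: (letrans _ (d + c)); first exact: V1.
by rewrite (addrC d c) (addrC d e); apply: V1.
Qed.

Lemma pos_scale (c : R) (y : Y) : 0 <= c -> le 0 y -> le 0 (c *: y).
Proof. by case: ordY => _ _ V2 _ c0 y0; have := V2 c _ _ c0 y0; rewrite scaler0. Qed.

Lemma interior_pos (z : Y) : interior K z -> le 0 z.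
Proof. by move=> [U [_ UK Uz]]; apply: UK. Qed.

Lemma interior_absorbing (z : Y) : interior K z -> forall v : Y,
  exists N, forall n, (N <= n)%N -> le 0 (z + n.+1%:R^-1 *: v).
Proof.
move=> [U [oU UK Uz]] v; case: vscY => C1 _ _.
have := C1 _ _ _ _ (conv_cst z) (conv_harmonic v).
by rewrite addr0 => /oU /(_ Uz) [N HN]; exists N => n /HN /UK.
Qed.

Lemma interior_addl (k z : Y) : le 0 k -> interior K z -> interior K (k + z).
Proof.
case: ordY => [[_ [_ letrans]] _ _ _] k0 [U [oU UK Uz]].
exists [set y | U (y - k)]; split.
- case: vscY => C1 _ _ u a ua /= Ua.
  by have /oU /(_ Ua) [N HN] := C1 _ _ _ _ ua (conv_cst (- k)); exists N.
- by move=> y /UK /(le_subr k y).2; apply: letrans k0.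
- by rewrite /= addrAC subrr add0r.
Qed.

Lemma interior_scale (c : R) (z : Y) : 0 < c -> interior K z -> interior K (c *: z).
Proof.
move=> c0 [U [oU UK Uz]]; exists [set y | U (c^-1 *: y)]; split.
- case: vscY => _ C2 _ u a ua /= Ua.
  by have /oU /(_ Ua) [N HN] := C2 _ _ c^-1 ua; exists N.
- move=> y /UK /(pos_scale (ltW c0)).
  by rewrite scalerA mulfV ?gt_eqF // scale1r.
- by rewrite /= scalerA mulVf ?gt_eqF // scale1r.
Qed.

Variable b : Y.

Definition scale_bounds (x : Y) : set R :=
  [set l | 0 <= l /\ le (- (l *: b)) x /\ le x (l *: b)].

Lemma scale_bounds_ge0 (x : Y) (l : R) : scale_bounds x l -> 0 <= l.
Proof. by case. Qed.

Lemma scale_boundsN (x : Y) (l : R) : scale_bounds x l -> scale_bounds (- x) l.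
Proof.
move=> [l0 [/le_subr h1 /le_subr h2]]; split=> //.
by split; apply/le_subr; rewrite opprK addrC // -[l *: b]opprK.
Qed.

Lemma scale_boundsZ (x : Y) (c l : R) :
  0 <= c -> scale_bounds x l -> scale_bounds (c *: x) (c * l).
Proof.
case: ordY => _ _ V2 _ c0 [l0 [h1 h2]].
split; first exact: mulr_ge0.
by split; [have := V2 c _ _ c0 h1; rewrite scalerN | have := V2 c _ _ c0 h2];
  rewrite scalerA.
Qed.

Lemma scale_boundsD (x y : Y) (s t : R) :
  scale_bounds x s -> scale_bounds y t -> scale_bounds (x + y) (s + t).
Proof.
move=> [s0 [h1 h2]] [t0 [h3 h4]]; split; first exact: addr_ge0.
by rewrite scalerDl opprD; split; apply: le_add.
Qed.

Hypothesis b_interior : interior K b.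

Lemma b_pos : le 0 b.
Proof. exact: interior_pos. Qed.

Lemma scale_bounds_up (x : Y) (l l' : R) :
  scale_bounds x l -> l <= l' -> scale_bounds x l'.
Proof.
case: ordY => [[_ [_ letrans]] _ _ _] [l0 [h1 h2]] ll'.
have d0 : le 0 ((l' - l) *: b) by apply: pos_scale b_pos; rewrite subr_ge0.
split; first exact: le_trans ll'.
split.
- by apply: letrans h1; apply/le_subr; rewrite opprK addrC -scalerBl.
- by apply: letrans h2 _; apply/le_subr; rewrite -scalerBl.
Qed.

Lemma scale_bounds_neq0 (x : Y) : scale_bounds x !=set0.
Proof.
have [N1 H1] := interior_absorbing b_interior x.
have [N2 H2] := interior_absorbing b_interior (- x).
pose n := (N1 + N2)%N; have n0 : 0 < n.+1%:R :> R by rewrite ltr0Sn.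
have unscale v : le 0 (b + n.+1%:R^-1 *: v) -> le 0 (n.+1%:R *: b + v).
  move=> /(pos_scale (ltW n0)).
  by rewrite scalerDr scalerA mulfV ?gt_eqF // scale1r.
exists n.+1%:R; split; first exact: ltW.
split; apply/le_subr; last exact: unscale (H2 _ (leq_addl _ _)).
by rewrite opprK addrC; apply: unscale (H1 _ (leq_addr _ _)).
Qed.

Lemma scale_bounds_inf (x : Y) : scale_bounds x (inf (scale_bounds x)).
Proof.
set m := inf _; case: ordY => _ _ _ V3; case: vscY => C1 C2 _.
have lb0 : lbound (scale_bounds x) 0 by move=> l [].
have m_near n : scale_bounds x (m + n.+1%:R^-1).
  have hp : 0 < n.+1%:R^-1 :> R by rewrite invr_gt0 ltr0Sn.
  have [e Se em] := inf_adherent hp (conj (scale_bounds_neq0 x) (ex_intro _ 0 lb0)).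
  exact: scale_bounds_up Se (ltW em).
have cb : conv (fun n => (m + n.+1%:R^-1) *: b) (m *: b).
  have := C1 _ _ _ _ (conv_cst (m *: b)) (conv_harmonic b).
  by rewrite addr0; apply: conv_ext => n; rewrite scalerDl.
have cnb : conv (fun n => - ((m + n.+1%:R^-1) *: b)) (- (m *: b)).
  have := C2 _ _ (-1) cb; rewrite scaleN1r.
  by apply: conv_ext => n; rewrite scaleN1r.
split; first exact: lb_le_inf (scale_bounds_neq0 x) lb0.
split.
- by apply: (V3 _ _ _ _ cnb (conv_cst x)) => n; case: (m_near n) => _ [].
- by apply: (V3 _ _ _ _ (conv_cst x) cb) => n; case: (m_near n) => _ [].
Qed.

Lemma inf_scale_bounds_le (x : Y) (l : R) :
  scale_bounds x l -> inf (scale_bounds x) <= l.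
Proof. by apply: ge_inf; exists 0 => ? []. Qed.

Lemma minkowski_intervalE (x : Y) :
  minkowski (order_interval le (- b) b) x = inf (scale_bounds x).
Proof.
case: ordY => [[_ [leanti _]] _ V2 _].
congr inf; apply/seteqP; split => l /=.
  move=> [l0 [a [a1 a2] ->]].
  by split=> //; split; [rewrite -scalerN |]; apply: V2.
move=> [l0 [h1 h2]]; split=> //.
case: (eqVneq l 0) h1 h2 => [-> | lp] h1 h2.
  exists 0; first by split; [apply/le_subr; rewrite sub0r opprK | ]; apply: b_pos.
  by rewrite scaler0; move: h2 h1; rewrite scale0r oppr0; apply: leanti.
have lp' : 0 < l by rewrite lt_neqAle eq_sym lp.
have li : 0 <= l^-1 by rewrite invr_ge0.
exists (l^-1 *: x); last by rewrite scalerA mulfV // scale1r.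
by split; [have := V2 _ _ _ li h1; rewrite scalerN | have := V2 _ _ _ li h2];
  rewrite scalerA mulVf // scale1r.
Qed.

Local Notation nrm := (minkowski (order_interval le (- b) b)).

Lemma minkowski_scale_bounds (x : Y) : scale_bounds x (nrm x).
Proof. by rewrite minkowski_intervalE; apply: scale_bounds_inf. Qed.

Lemma minkowski_le (x : Y) (l : R) : scale_bounds x l -> nrm x <= l.
Proof. by rewrite minkowski_intervalE; apply: inf_scale_bounds_le. Qed.

Lemma minkowski_ge0 (x : Y) : 0 <= nrm x.
Proof. exact/scale_bounds_ge0/minkowski_scale_bounds. Qed.

Lemma minkowskiZ_le (l : R) (x : Y) : nrm (l *: x) <= `|l| * nrm x.
Proof.
have Bx := minkowski_scale_bounds x; apply: minkowski_le.
have [l0 | l0] := lerP 0 l; first by rewrite ger0_norm //; apply: scale_boundsZ.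
rewrite ltr0_norm // -[l *: x]opprK -scalerN -scaleNr.
by apply: scale_boundsZ; [rewrite oppr_ge0 ltW | apply: scale_boundsN].
Qed.

Lemma minkowski_is_norm : is_norm nrm.
Proof.
case: ordY => [[lerefl [leanti _]] _ _ _].
split; first exact: minkowski_ge0.
- move=> x; split => [nx0 | ->].
    have := minkowski_scale_bounds x; rewrite nx0 => -[_ [h1 h2]].
    by move: h2 h1; rewrite scale0r oppr0; apply: leanti.
  apply/eqP; rewrite eq_le minkowski_ge0 andbT; apply: minkowski_le.
  by split=> //; rewrite scale0r oppr0; split; apply: lerefl.
- move=> l x; apply/eqP; rewrite eq_le minkowskiZ_le /=.
  have [-> | l0] := eqVneq l 0; first by rewrite normr0 mul0r minkowski_ge0.
  have := minkowskiZ_le l^-1 (l *: x); rewrite scalerA mulVf // scale1r normfV.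
  by rewrite -(ler_pM2l (_ : 0 < `|l|)) ?normr_gt0 // mulrA mulfV ?normr_eq0 // mul1r.
- by move=> x y; apply/minkowski_le/scale_boundsD; apply: minkowski_scale_bounds.
Qed.

Lemma minkowski_monotone : monotone_norm le nrm.
Proof.
case: ordY => [[_ [_ letrans]] _ _ _] x y x0 xy; apply: minkowski_le.
have [l0 [h1 h2]] := minkowski_scale_bounds y; split=> //; split.
- by apply: letrans x0; apply/le_subr; rewrite sub0r opprK; apply: pos_scale b_pos.
- exact: letrans h2.
Qed.

Lemma minkowski_lt_interior (x : Y) (eps : R) : nrm x < eps ->
  vlt conv le (- (eps *: b)) x /\ vlt conv le x (eps *: b).
Proof.
move=> lt_eps; have [_ [/le_subr h1 /le_subr h2]] := minkowski_scale_bounds x.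
have gap : interior K ((eps - nrm x) *: b).
  by apply: interior_scale => //; rewrite subr_gt0.
split; rewrite /vlt.
- rewrite (_ : _ - _ = (x - - (nrm x *: b)) + (eps - nrm x) *: b).
    exact: interior_addl.
  by rewrite scalerBl !opprK (addrC (eps *: b)) addrA addrK.
- rewrite (_ : _ - _ = (nrm x *: b - x) + (eps - nrm x) *: b).
    exact: interior_addl.
  by rewrite scalerBl [RHS]addrC addrA addrNK.
Qed.

Lemma interior_minkowski_lt (x : Y) (eps : R) : 0 < eps ->
  vlt conv le (- (eps *: b)) x -> vlt conv le x (eps *: b) -> nrm x < eps.
Proof.
move=> e0 h1 h2.
have [N1 H1] := interior_absorbing h1 (- (eps *: b)).
have [N2 H2] := interior_absorbing h2 (- (eps *: b)).
have k1 := H1 (N1 + N2)%N (leq_addr _ _); have k2 := H2 (N1 + N2)%N (leq_addl _ _).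
set h := (N1 + N2).+1%:R^-1 in k1 k2.
have h0 : 0 < h by rewrite invr_gt0 ltr0Sn.
have h_le1 : h <= 1 by rewrite invf_le1 ?ltr0Sn // ler1n.
apply: (le_lt_trans (minkowski_le (l := eps - eps * h) _)); last by nra.
split; first by nra.
rewrite scalerBl -(mulrC h) -scalerA.
split; apply/le_subr; [move: k1 | move: k2]; rewrite scalerN.
- by rewrite !opprK addrA.
- by rewrite addrAC.
Qed.

End SolidVectorSpace.

Theorem lemma7p6 (R : realType) (Y : lmodType R)
  (conv : (nat -> Y) -> Y -> Prop) (le : Y -> Y -> Prop)
  (HY : solid_vector_space conv le) (b : Y) (Hb : vlt conv le 0 b) :
  let nrm := minkowski (order_interval le (- b) b) in
  (is_norm nrm /\ monotone_norm le nrm /\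
   (forall x : Y,
      let S := [set l : R | 0 <= l /\ le (- (l *: b)) x /\ le x (l *: b)] in
      S (nrm x) /\ (forall l, S l -> nrm x <= l))) /\
  (forall (x : Y) (eps : R), 0 < eps ->
     (nrm x < eps <-> vlt conv le (- (eps *: b)) x /\ vlt conv le x (eps *: b))).
Proof.
case: HY => vscY ordY _ nrm.
have b_int : vinterior conv (pos_cone le) b by move: Hb; rewrite /vlt subr0.
split; first split.
- exact: (minkowski_is_norm vscY ordY b_int).
- split; first exact: (minkowski_monotone vscY ordY b_int).
  move=> x S; split; first exact: (minkowski_scale_bounds vscY ordY b_int).
  exact: (minkowski_le ordY b_int).
- move=> x eps e0; split; first exact: (minkowski_lt_interior vscY ordY b_int).
  by case; apply: (interior_minkowski_lt vscY ordY b_int).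
Qed.
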